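(* Assume the setting of the transformation mechanism below, and further assume $a\ge0$ and that every record $r$ has attribute $r.c\ge0$. Let $q(D)=\sum_{r\in D}r.c$. Then the per-record sensitivity of $D\mapsto f(q(D)+a)$ is $\Delta_f(r)=f(r.c+a)-f(a)$, and the mechanism $M(D)=g\big(f(q(D)+a)+Z\big)$, $Z\sim\operatorname{Lap}(0,b)$, satisfies $P$-PRDP with policy function $P(r)=[f(r.c+a)-f(a)]/b$.
   Context: Setting: $b\in(0,\infty)$, $f:[a,\infty)\to\mathbb{R}$ is concave and strictly increasing, $g:\mathbb{R}\to\mathbb{R}$ is measurable, and $Z\sim\operatorname{Lap}(0,b)$ (density $\frac{1}{2b}e^{-|x|/b}$) is independent of the data. Databases are finite multisets of records (including the empty database); $D,D'$ are neighbors differing on record $r$ if their symmetric difference $D\ominus D'=\{r\}$. The per-record sensitivity of a real-valued query $u$ at record $r$ is $\sup\{|u(D)-u(D')|:D\ominus D'=\{r\}\}$. A mechanism $M$ satisfies $P$-PRDP if for every record $r$, every $D,D'$ with $D\ominus D'=\{r\}$, and every measurable $S$, $\Pr[M(D)\in S]\le e^{P(r)}\Pr[M(D')\in S]$. *)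

From HB Require Import structures.
From mathcomp Require Import all_boot all_order all_algebra.
From mathcomp Require Import all_classical all_reals all_analysis.
From Stdlib Require Import Permutation.
Set Implicit Arguments. Unset Strict Implicit. Unset Printing Implicit Defensive.
Import Order.TTheory GRing.Theory Num.Theory.
Local Open Scope classical_set_scope.
Local Open Scope ring_scope.

(* A database is a finite multiset of records, represented by a list
   (order irrelevant: all notions below are invariant under permutation). *)
Definition database (rec : Type) := seq rec.

(* D and D' are neighbours differing on record r: the multiset symmetric
   difference of D and D' is exactly {r}, i.e. one of them is the other
   with one extra copy of r. *)
Definition neighbors (rec : Type) (r : rec) (D D' : database rec) : Prop :=
  Permutation D (r :: D') \/ Permutation D' (r :: D).

Definition per_record_sensitivity (R : realType) (rec : Type)
  (u : database rec -> R) (r : rec) : \bar R :=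
  ereal_sup [set e : \bar R | exists D D' : database rec,
                 neighbors r D D' /\ e = (`|u D - u D'|)%:E].

Definition sum_query (R : realType) (rec : Type) (c : rec -> R)
  (D : database rec) : R := \sum_(x <- D) c x.

Definition is_laplace (R : realType) (d : measure_display) (T : measurableType d)
  (Pr : probability T R) (b : R) (Z : T -> R) : Prop :=
  measurable_fun setT Z /\
  forall A : set R, measurable A ->
    Pr (Z @^-1` A) =
    (\int[@lebesgue_measure R]_(x in A) ((2 * b)^-1 * expR (- `|x| / b))%:E)%E.

Definition PRDP (R : realType) (d : measure_display) (T : measurableType d)
  (Pr : probability T R) (rec : Type) (M : database rec -> T -> R)
  (P : rec -> R) : Prop :=
  forall (r : rec) (D D' : database rec), neighbors r D D' ->
  forall S : set R, measurable S ->
    (Pr (M D @^-1` S) <= (expR (P r))%:E * Pr (M D' @^-1` S))%E.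

From HB Require Import structures.
From mathcomp Require Import all_boot all_order all_algebra.
From mathcomp Require Import all_classical all_reals all_analysis.
From mathcomp Require Import ring lra measurable_realfun.
From Stdlib Require Import Permutation.
Set Implicit Arguments. Unset Strict Implicit. Unset Printing Implicit Defensive.
Import Order.TTheory GRing.Theory Num.Theory.
Local Open Scope classical_set_scope.
Local Open Scope ring_scope.

(** Adding a record r raises q by c r >= 0.  Concavity makes the increments of
    f shrink as the argument grows, so f (q + c r + a) - f (q + a) is at most
    f (c r + a) - f a, and the one-record database attains this bound.
    The Laplace density p satisfies p (y - e) <= exp (|e| / b) p y; by
    translation invariance of Lebesgue measure, shifting Z by e therefore
    inflates the probability of any event by at most that factor, and
    post-processing by g preserves the bound. *)

Lemma sum_query_perm (R : realType) (rec : Type) (c : rec -> R) (D D' : seq rec) :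
  Permutation D D' -> sum_query c D = sum_query c D'.
Proof.
rewrite /sum_query; elim=> [|x l l' _ IH|x y l|l l' l'' _ IH1 _ IH2] //.
- by rewrite !big_cons IH.
- by rewrite !big_cons addrCA.
- by rewrite IH1 IH2.
Qed.

Lemma sum_query_cons (R : realType) (rec : Type) (c : rec -> R) r (D : seq rec) :
  sum_query c (r :: D) = c r + sum_query c D.
Proof. by rewrite /sum_query big_cons. Qed.

Lemma sum_query_ge0 (R : realType) (rec : Type) (c : rec -> R) (D : seq rec) :
  (forall r, 0 <= c r) -> 0 <= sum_query c D.
Proof. by move=> c_ge0; apply: sumr_ge0. Qed.

Section concave_increments.
Variables (R : realType) (a : R) (f : R -> R).
Hypothesis f_concave : forall x y t, a <= x -> a <= y -> 0 <= t <= 1 ->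
  t * f x + (1 - t) * f y <= f (t * x + (1 - t) * y).

(* [y + s] and [y + h] are the convex combinations of [y] and [y + s + h]
   with weights [h / (s + h)] and [s / (s + h)]; adding the two concavity
   inequalities gives the claim. *)
Lemma concave_increment_le y s h : a <= y -> 0 <= s -> 0 <= h ->
  f (y + s + h) - f (y + s) <= f (y + h) - f y.
Proof.
move=> ay s_ge0 h_ge0.
have [sh0|sh_neq0] := eqVneq (s + h) 0.
  have [-> ->] : s = 0 /\ h = 0 by split; lra.
  by rewrite !addr0 subrr.
have sh_gt0 : 0 < s + h by rewrite lt_neqAle eq_sym sh_neq0; lra.
set t := h / (s + h).
have t01 : 0 <= t <= 1.
  by rewrite divr_ge0 ?ler_pdivrMr ?mul1r //=; lra.
have t01' : 0 <= 1 - t <= 1 by lra.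
have ay' : a <= y + s + h by lra.
have := f_concave ay ay' t01'; have := f_concave ay ay' t01.
have -> : t * y + (1 - t) * (y + s + h) = y + s by rewrite /t; field.
have -> : (1 - t) * y + (1 - (1 - t)) * (y + s + h) = y + h by rewrite /t; field.
by rewrite (_ : 1 - (1 - t) = t); [lra | ring].
Qed.

End concave_increments.

Lemma strictly_increasing_le (R : realType) (a : R) (f : R -> R) :
  (forall x y, a <= x -> x < y -> f x < f y) ->
  forall x y, a <= x -> x <= y -> f x <= f y.
Proof.
move=> f_incr x y ax; rewrite le_eqVlt => /predU1P[-> //|xy].
exact/ltW/f_incr.
Qed.

Section concave_sum_query.
Variables (R : realType) (rec : Type) (c : rec -> R) (a : R) (f : R -> R).
Hypothesis c_ge0 : forall r, 0 <= c r.
Hypothesis f_concave : forall x y t, a <= x -> a <= y -> 0 <= t <= 1 ->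
  t * f x + (1 - t) * f y <= f (t * x + (1 - t) * y).
Hypothesis f_incr : forall x y, a <= x -> x < y -> f x < f y.

Let u (D : database rec) := f (sum_query c D + a).

Lemma concave_sum_query_neighbor_le r D D' : neighbors r D D' ->
  `|u D - u D'| <= f (c r + a) - f a.
Proof.
suff add_le D1 D2 : Permutation D1 (r :: D2) ->
    `|u D1 - u D2| <= f (c r + a) - f a.
  by case=> [/add_le // | /add_le]; rewrite distrC.
rewrite /u => /sum_query_perm ->; rewrite sum_query_cons.
have q_ge0 : 0 <= sum_query c D2 by exact: sum_query_ge0.
have cr_ge0 := c_ge0 r.
rewrite ger0_norm; last by rewrite subr_ge0 (strictly_increasing_le f_incr) //; lra.
have := concave_increment_le f_concave (lexx a) q_ge0 cr_ge0.
rewrite (_ : c r + _ + a = a + sum_query c D2 + c r); last by ring.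
by rewrite [_ + a]addrC [c r + a]addrC.
Qed.

Lemma per_record_sensitivity_concave_sum_query r :
  per_record_sensitivity u r = (f (c r + a) - f a)%:E.
Proof.
apply/eqP; rewrite eq_le; apply/andP; split.
  apply: ge_ereal_sup => _ [D [D' [DD' ->]]].
  by rewrite lee_fin; exact: concave_sum_query_neighbor_le DD'.
apply: ereal_sup_ubound; exists [:: r], [::]; split; first by left.
have cr_ge0 := c_ge0 r.
rewrite /u sum_query_cons /sum_query big_nil addr0 add0r ger0_norm //.
by rewrite subr_ge0 (strictly_increasing_le f_incr) //; lra.
Qed.

End concave_sum_query.

Section translation_invariance.
Variable R : realType.
Local Open Scope ereal_scope.

Lemma measurable_addr (m : R) : measurable_fun setT (fun x : R => x + m)%R.
Proof. exact: measurable_funD. Qed.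

(* The library's pushforward measure instance takes the measurability proof as
   an argument, so it cannot be found by canonical-structure inference. *)
Let shifted_lebesgue (m : R) : {measure set (measurableTypeR R) -> \bar R} :=
  @measure_function_pushforward__canonical__measure_function_Measure
    _ _ (measurableTypeR R) (measurableTypeR R) R
    lebesgue_measure _ (measurable_addr m).

Lemma lebesgue_measure_shift (m : R) (A : set R) : measurable A ->
  lebesgue_measure ((fun x : R => x + m)%R @^-1` A) = lebesgue_measure A.
Proof.
move=> mA; symmetry.
apply: (lebesgue_measure_unique (mu := shifted_lebesgue m)) => // _ [[x y] _ <-].
rewrite [RHS]/= /pushforward.
have -> : (fun z : R => z + m)%R @^-1` `]x, y]%classic = `](x - m)%R, (y - m)%R]%classic.
  by apply/seteqP; split => z /=; rewrite !in_itv /= => /andP[? ?]; apply/andP; split; lra.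
rewrite !lebesgue_measure_itv /= !lte_fin ltrD2r.
by case: ifP => // _; rewrite -!EFinD; congr _%:E; lra.
Qed.

Lemma ge0_integral_shift (m : R) (B : set R) (h : R -> R) : measurable B ->
  measurable_fun setT h -> (forall x, 0 <= h x)%R ->
  \int[lebesgue_measure]_(x in (fun x : R => x + m)%R @^-1` B) (h x)%:E =
  \int[lebesgue_measure]_(y in B) (h (y - m)%R)%:E.
Proof.
move=> mB mh h_ge0.
have mh_shift : measurable_fun setT (fun y : R => h (y - m)%R).
  exact: measurableT_comp mh (measurable_addr (- m)).
rewrite [RHS](eq_measure_integral (shifted_lebesgue m)); last first.
  by move=> X mX _; symmetry; exact: lebesgue_measure_shift.
rewrite ge0_integral_pushforward //.
- by apply: eq_integral => x _ /=; rewrite addrK.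
- exact: measurable_addr.
- by apply/measurable_EFinP; exact: measurable_funS mh_shift.
- by move=> y _; rewrite lee_fin.
Qed.

End translation_invariance.

Section density_shift.
Variables (R : realType) (d : measure_display) (T : measurableType d).
Variables (Pr : probability T R) (Z : T -> R) (p : R -> R).
Hypothesis p_ge0 : forall x, 0 <= p x.
Hypothesis mp : measurable_fun setT p.
Hypothesis Z_density : forall A, measurable A ->
  Pr (Z @^-1` A) = (\int[lebesgue_measure]_(x in A) (p x)%:E)%E.

Lemma prob_shift_le (e k : R) (A : set R) : measurable A ->
  (forall y, p (y - e) <= k * p y) -> 0 <= k ->
  (Pr ((fun w => Z w + e)%R @^-1` A) <= k%:E * Pr (Z @^-1` A))%E.
Proof.
move=> mA p_shift k_ge0.
have mA_shift : measurable ((fun x => x + e) @^-1` A).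
  by rewrite -[X in measurable X]setTI; exact: measurable_addr.
rewrite -[X in (Pr X <= _)%E]/(Z @^-1` ((fun x => x + e) @^-1` A)).
rewrite !Z_density // ge0_integral_shift // -ge0_integralZl //; last 2 first.
- by apply/measurable_EFinP; exact: measurable_funTS.
- by move=> x _; rewrite lee_fin.
apply: ge0_le_integral => //.
- by move=> x _; rewrite lee_fin.
- apply/measurable_EFinP/measurable_funTS.
  exact: measurableT_comp mp (measurable_addr (- e)).
- by apply/measurable_EFinP/measurable_funTS/measurable_funM.
- by move=> x _; rewrite lee_fin.
Qed.

End density_shift.

Section laplace_mechanism.
Variables (R : realType) (b : R) (d : measure_display) (T : measurableType d).
Variables (Pr : probability T R) (Z : T -> R).
Hypothesis b_gt0 : 0 < b.
Hypothesis Z_laplace : is_laplace Pr b Z.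

Definition laplace_pdf (x : R) : R := (2 * b)^-1 * expR (- `|x| / b).

Lemma laplace_pdf_ge0 x : 0 <= laplace_pdf x.
Proof. by rewrite mulr_ge0 ?expR_ge0 // invr_ge0 mulr_ge0 // ltW. Qed.

Lemma measurable_laplace_pdf : measurable_fun setT laplace_pdf.
Proof.
apply: measurable_funM => //; apply: measurableT_comp => //.
by apply: measurable_funM => //; apply: measurableT_comp.
Qed.

Lemma laplace_pdf_shift_le y e : laplace_pdf (y - e) <= expR (`|e| / b) * laplace_pdf y.
Proof.
rewrite /laplace_pdf mulrCA ler_pM2l ?invr_gt0 ?mulr_gt0 //.
rewrite -expRD ler_expR -mulrDl ler_pM2r ?invr_gt0 //.
have := ler_normD (y - e) e; rewrite subrK; lra.
Qed.

Lemma laplace_mechanism_le (g : R -> R) (mu mu' : R) (S : set R) :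
  measurable_fun setT g -> measurable S ->
  (Pr ((fun w => g (mu + Z w))%R @^-1` S) <=
   (expR (`|mu - mu'| / b))%:E * Pr ((fun w => g (mu' + Z w))%R @^-1` S))%E.
Proof.
move=> mg mS.
set A := (fun z => g (mu' + z)) @^-1` S.
have mA : measurable A.
  have mgS : measurable_fun setT (fun z => g (mu' + z)).
    by apply: measurableT_comp mg _; apply: measurable_funD => //; exact: measurable_cst.
  by rewrite -[X in measurable X]setTI; exact: mgS.
have -> : (fun w => g (mu + Z w)) @^-1` S = (fun w => Z w + (mu - mu')) @^-1` A.
  by apply/seteqP; split => w; rewrite /A /= (_ : mu' + (Z w + (mu - mu')) = mu + Z w) //; ring.
apply: (prob_shift_le (p := laplace_pdf) laplace_pdf_ge0 measurable_laplace_pdf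
  Z_laplace.2 mA (laplace_pdf_shift_le ^~ _) (expR_ge0 _)).
Qed.

End laplace_mechanism.

Theorem mainTheorem9 (R : realType) (rec : Type) (c : rec -> R)
  (a b : R) (f g : R -> R)
  (d : measure_display) (T : measurableType d) (Pr : probability T R) (Z : T -> R) :
  0 < b -> 0 <= a -> (forall r, 0 <= c r) ->
  (forall x y t, a <= x -> a <= y -> 0 <= t <= 1 ->
     t * f x + (1 - t) * f y <= f (t * x + (1 - t) * y)) ->
  (forall x y, a <= x -> x < y -> f x < f y) ->
  measurable_fun setT g ->
  is_laplace Pr b Z ->
  (forall r : rec,
     per_record_sensitivity (fun D => f (sum_query c D + a)) r
     = (f (c r + a) - f a)%:E)
  /\
  PRDP Pr (fun D (w : T) => g (f (sum_query c D + a) + Z w))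
       (fun r => (f (c r + a) - f a) / b).
Proof.
move=> b_gt0 _ c_ge0 f_concave f_incr mg Z_laplace; split.
  exact: per_record_sensitivity_concave_sum_query.
move=> r D D' DD' S mS /=.
apply: le_trans (laplace_mechanism_le b_gt0 Z_laplace _ _ mg mS) _.
apply: lee_wpmul2r; first exact: measure_ge0.
rewrite lee_fin ler_expR ler_pM2r ?invr_gt0 //.
exact: (concave_sum_query_neighbor_le c_ge0 f_concave f_incr DD').
Qed.
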